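(* Let $M$ be a constant symmetric positive definite symplectic $2n\times 2n$ matrix and let $\Gamma_M=\phi_M^{-(Q-2)/4}$. Then $\mathcal L_M\Gamma_M(z)=0$ for all $z\in\mathbb R^{2n+1}\setminus\{0\}$.
   Context: Points of $\mathbb R^{2n+1}$ are written $(x,t)$, $x\in\mathbb R^{2n}$, $t\in\mathbb R$. $J=\begin{pmatrix}0&-\mathbb I_n\\ \mathbb I_n&0\end{pmatrix}$, $Q=2n+2$; $M$ symplectic means $M^{-1}=J^tMJ$. $X_i=\partial_{x_i}+2(Jx)_i\partial_t$ ($i=1,\dots,2n$), $D^2_{\mathbb H}\psi=\big(\tfrac12(X_iX_j+X_jX_i)\psi\big)_{i,j}$, $\mathcal L_M\psi=\mathrm{tr}(MD^2_{\mathbb H}\psi)$, and $\phi_M(x,t)=\langle M^{-1}x,x\rangle^2+t^2$. *)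

From Stdlib Require Import Reals Lra Lia List Arith ClassicalEpsilon.
Import ListNotations.
Open Scope R_scope.

(* Points of R^{2n+1} are functions z : nat -> R; coordinates 0..2n-1 are x,
   coordinate 2n is t. Coordinates >= 2n+1 are ignored.
   Matrices of size 2n x 2n are functions nat -> nat -> R, entries i,j < 2n. *)

Definition rsum (N : nat) (f : nat -> R) : R :=
  fold_right Rplus 0 (map f (seq 0 N)).

Definition upd (z : nat -> R) (k : nat) (s : R) : nat -> R :=
  fun j => if Nat.eqb j k then s else z j.

Definition has_pderiv (f : (nat -> R) -> R) (k : nat) (z : nat -> R) (l : R) : Prop :=
  derivable_pt_lim (fun s => f (upd z k s)) (z k) l.

Definition pdiff_at (f : (nat -> R) -> R) (k : nat) (z : nat -> R) : Prop :=
  exists l, has_pderiv f k z l.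

(* the partial derivative (its value when it exists, 0 otherwise) *)
Definition pd (f : (nat -> R) -> R) (k : nat) (z : nat -> R) : R :=
  match excluded_middle_informative (pdiff_at f k z) with
  | left H => proj1_sig (constructive_indefinite_description _ H)
  | right _ => 0
  end.

(* J = [[0, -I_n],[I_n, 0]] *)
Definition Jmat (n : nat) (i j : nat) : R :=
  if (Nat.ltb i n && Nat.leb n j && Nat.eqb j (i + n))%bool then -1
  else if (Nat.leb n i && Nat.ltb j n && Nat.eqb i (j + n))%bool then 1
  else 0.

Definition trmat (A : nat -> nat -> R) : nat -> nat -> R := fun i j => A j i.

Definition matmul (n : nat) (A B : nat -> nat -> R) : nat -> nat -> R :=
  fun i j => rsum (2 * n) (fun k => A i k * B k j).

Definition idmat (i j : nat) : R := if Nat.eqb i j then 1 else 0.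

Definition Jx (n : nat) (z : nat -> R) (i : nat) : R :=
  rsum (2 * n) (fun j => Jmat n i j * z j).

Definition Xop (n : nat) (i : nat) (f : (nat -> R) -> R) : (nat -> R) -> R :=
  fun z => pd f i z + 2 * Jx n z i * pd f (2 * n) z.

Definition D2H (n : nat) (i j : nat) (f : (nat -> R) -> R) : (nat -> R) -> R :=
  fun z => / 2 * (Xop n i (Xop n j f) z + Xop n j (Xop n i f) z).

Definition LM (n : nat) (M : nat -> nat -> R) (f : (nat -> R) -> R) : (nat -> R) -> R :=
  fun z => rsum (2 * n) (fun i => rsum (2 * n) (fun j => M i j * D2H n j i f z)).

Definition quad (n : nat) (A : nat -> nat -> R) (z : nat -> R) : R :=
  rsum (2 * n) (fun i => rsum (2 * n) (fun j => A i j * z j) * z i).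

(* phi_M(x,t) = <M^{-1} x, x>^2 + t^2, given Minv = M^{-1} *)
Definition phiM (n : nat) (Minv : nat -> nat -> R) (z : nat -> R) : R :=
  (quad n Minv z) ^ 2 + (z (2 * n)%nat) ^ 2.

Definition Qdim (n : nat) : R := INR (2 * n + 2).

Definition GammaM (n : nat) (Minv : nat -> nat -> R) (z : nat -> R) : R :=
  Rpower (phiM n Minv z) (- (Qdim n - 2) / 4).

Definition sym_mat (n : nat) (M : nat -> nat -> R) : Prop :=
  forall i j, (i < 2 * n)%nat -> (j < 2 * n)%nat -> M i j = M j i.

Definition posdef_mat (n : nat) (M : nat -> nat -> R) : Prop :=
  forall v : nat -> R, (exists i, (i < 2 * n)%nat /\ v i <> 0) ->
    0 < rsum (2 * n) (fun i => rsum (2 * n) (fun j => M i j * v j) * v i).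

Definition is_inverse (n : nat) (M Minv : nat -> nat -> R) : Prop :=
  forall i j, (i < 2 * n)%nat -> (j < 2 * n)%nat ->
    matmul n M Minv i j = idmat i j /\ matmul n Minv M i j = idmat i j.

Definition symplectic (n : nat) (M Minv : nat -> nat -> R) : Prop :=
  is_inverse n M Minv /\
  forall i j, (i < 2 * n)%nat -> (j < 2 * n)%nat ->
    Minv i j = matmul n (trmat (Jmat n)) (matmul n M (Jmat n)) i j.

Definition nonzero_pt (n : nat) (z : nat -> R) : Prop :=
  exists k, (k <= 2 * n)%nat /\ z k <> 0.

From Stdlib Require Import Reals Lra Lia List FunctionalExtensionality ClassicalEpsilon.
Open Scope R_scope.

(* With [A = M^{-1}], [q = <A x, x>] and [t], put [phi = q^2 + t^2] and [p = -(Q-2)/4 = -n/2].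
   The vector fields [X_i] act as derivations, with [X_i q = 2 (A x)_i] and [X_i t = 2 (J x)_i],
   so [X_i phi = 4 E_i] where [E_i = q (A x)_i + t (J x)_i], and
   [X_j X_i phi^p = 4 p phi^(p-2) (4 (p-1) E_i E_j + phi X_j E_i)].
   Contracting with [M], the symplectic relation [A = J^t M J] gives
   [<M A x, A x> = <M J x, J x> = q], [<M J x, A x> = <J x, x> = 0] and [tr (M A) = 2 n];
   the [t J_ij] part of [X_j E_i] is antisymmetric and disappears in the symmetrized Hessian.
   Altogether [L_M phi^p = 4 p q phi^(p-1) (4 p + 2 n) = 0]. *)

Lemma rsum_S N f : rsum (S N) f = rsum N f + f N.
Proof.
  unfold rsum. rewrite seq_S, map_app, fold_right_app. simpl.
  generalize (f N); induction (map f (seq 0 N)) as [|a l IH]; intro c; simpl.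
  - ring.
  - rewrite IH. ring.
Qed.

Lemma rsum_ext N f g : (forall i, (i < N)%nat -> f i = g i) -> rsum N f = rsum N g.
Proof. induction N; intros H; [reflexivity|]. rewrite !rsum_S, IHN, H; auto. Qed.

Lemma rsum_plus N f g : rsum N (fun i => f i + g i) = rsum N f + rsum N g.
Proof. induction N; [cbn; ring|]. rewrite !rsum_S, IHN. ring. Qed.

Lemma rsum_scal N c f : rsum N (fun i => c * f i) = c * rsum N f.
Proof. induction N; [cbn; ring|]. rewrite !rsum_S, IHN. ring. Qed.

Lemma rsum_const N c : rsum N (fun _ => c) = INR N * c.
Proof. induction N; [cbn; ring|]. rewrite rsum_S, IHN, S_INR. ring. Qed.

Lemma rsum_swap N1 N2 f :
  rsum N1 (fun i => rsum N2 (fun j => f i j)) = rsum N2 (fun j => rsum N1 (fun i => f i j)).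
Proof.
  induction N1.
  - symmetry. cbn. rewrite (rsum_const N2 0). ring.
  - rewrite rsum_S, IHN1, <- rsum_plus. apply rsum_ext. intros. rewrite rsum_S. reflexivity.
Qed.

Lemma rsum_kronecker N c k :
  rsum N (fun j => c j * (if Nat.eqb j k then 1 else 0)) = if Nat.ltb k N then c k else 0.
Proof.
  induction N; [reflexivity|]. rewrite rsum_S, IHN.
  destruct (Nat.eqb_spec N k), (Nat.ltb_spec k N), (Nat.ltb_spec k (S N)); try lia; subst; ring.
Qed.
Definition mxv (n : nat) (B : nat -> nat -> R) (z : nat -> R) (i : nat) : R :=
  rsum (2 * n) (fun j => B i j * z j).

Definition dsum (n : nat) (F : nat -> nat -> R) : R :=
  rsum (2 * n) (fun i => rsum (2 * n) (fun j => F i j)).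

Definition bform (n : nat) (B : nat -> nat -> R) (u v : nat -> R) : R :=
  dsum n (fun i j => B i j * u i * v j).

Lemma dsum_ext n F G : (forall i j, (i < 2 * n)%nat -> (j < 2 * n)%nat -> F i j = G i j) ->
  dsum n F = dsum n G.
Proof. intros H. apply rsum_ext. intros i Hi. apply rsum_ext. auto. Qed.

Lemma dsum_plus n F G : dsum n (fun i j => F i j + G i j) = dsum n F + dsum n G.
Proof. unfold dsum. rewrite <- rsum_plus. apply rsum_ext. intros. apply rsum_plus. Qed.

Lemma dsum_scal n c F : dsum n (fun i j => c * F i j) = c * dsum n F.
Proof. unfold dsum. rewrite <- rsum_scal. apply rsum_ext. intros. apply rsum_scal. Qed.

Lemma mxv_matmul n B C z i : mxv n B (mxv n C z) i = mxv n (matmul n B C) z i.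
Proof.
  unfold mxv, matmul.
  transitivity (rsum (2 * n) (fun j => rsum (2 * n) (fun k => B i j * C j k * z k))).
  - apply rsum_ext. intros. rewrite <- rsum_scal. apply rsum_ext. intros. ring.
  - rewrite rsum_swap. apply rsum_ext. intros.
    rewrite Rmult_comm, <- rsum_scal. apply rsum_ext. intros. ring.
Qed.

Lemma mxv_trmat_adj n B w z :
  rsum (2 * n) (fun i => mxv n (trmat B) w i * z i) = rsum (2 * n) (fun i => w i * mxv n B z i).
Proof.
  unfold mxv, trmat.
  transitivity (rsum (2 * n) (fun i => rsum (2 * n) (fun j => B j i * w j * z i))).
  - apply rsum_ext. intros. rewrite Rmult_comm, <- rsum_scal. apply rsum_ext. intros. ring.
  - rewrite rsum_swap. apply rsum_ext. intros. rewrite <- rsum_scal. apply rsum_ext. intros. ring.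
Qed.

Lemma bform_mxv_r n B u v : bform n B u v = rsum (2 * n) (fun i => u i * mxv n B v i).
Proof.
  apply rsum_ext. intros. unfold mxv. rewrite <- rsum_scal. apply rsum_ext. intros. ring.
Qed.

Lemma bform_sym n B u v : sym_mat n B -> bform n B u v = bform n B v u.
Proof.
  intros HB. unfold bform, dsum. rewrite rsum_swap.
  apply rsum_ext. intros. apply rsum_ext. intros. rewrite HB by assumption. ring.
Qed.

Lemma bform_comb n B u v a b :
  bform n B (fun i => a * u i + b * v i) (fun i => a * u i + b * v i) =
  a ^ 2 * bform n B u u + a * b * (bform n B u v + bform n B v u) + b ^ 2 * bform n B v v.
Proof.
  unfold bform. rewrite <- dsum_plus, <- !dsum_scal, <- !dsum_plus.
  apply dsum_ext. intros. ring.
Qed.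

Lemma quad_antisym n B z : (forall i j, B i j = - B j i) -> quad n B z = 0.
Proof.
  intros HB. assert (E : quad n B z = bform n B z z).
  { rewrite bform_mxv_r. apply rsum_ext. intros. apply Rmult_comm. }
  assert (E' : bform n B z z = -1 * bform n B z z).
  { unfold bform. rewrite <- dsum_scal. unfold dsum at 1. rewrite rsum_swap.
    apply rsum_ext. intros. apply rsum_ext. intros. rewrite HB. ring. }
  lra.
Qed.

Lemma Jmat_antisym n i j : Jmat n i j = - Jmat n j i.
Proof.
  unfold Jmat.
  destruct (Nat.ltb_spec i n), (Nat.leb_spec n j), (Nat.eqb_spec j (i + n)),
           (Nat.leb_spec n i), (Nat.ltb_spec j n), (Nat.eqb_spec i (j + n));
  simpl; try lia; ring.
Qed.

Lemma Jx_low n z m : (m < n)%nat -> Jx n z m = - z (m + n)%nat.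
Proof.
  intros Hm. unfold Jx.
  rewrite (rsum_ext _ _ (fun j => - z j * (if Nat.eqb j (m + n) then 1 else 0))), rsum_kronecker.
  - destruct (Nat.ltb_spec (m + n) (2 * n)); [reflexivity | lia].
  - intros j _. unfold Jmat.
    destruct (Nat.ltb_spec m n), (Nat.leb_spec n j), (Nat.eqb_spec j (m + n)), (Nat.leb_spec n m);
      simpl; try lia; ring.
Qed.

Lemma Jx_high n z m : (n <= m < 2 * n)%nat -> Jx n z m = z (m - n)%nat.
Proof.
  intros Hm. unfold Jx.
  rewrite (rsum_ext _ _ (fun j => z j * (if Nat.eqb j (m - n) then 1 else 0))), rsum_kronecker.
  - destruct (Nat.ltb_spec (m - n) (2 * n)); [reflexivity | lia].
  - intros j _. unfold Jmat.
    destruct (Nat.ltb_spec m n), (Nat.leb_spec n m), (Nat.ltb_spec j n), (Nat.eqb_spec m (j + n)),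
      (Nat.eqb_spec j (m - n)); simpl; try lia; ring.
Qed.

Lemma Jx_nonzero n z : (exists k, (k < 2 * n)%nat /\ z k <> 0) ->
  exists i, (i < 2 * n)%nat /\ Jx n z i <> 0.
Proof.
  intros [k [Hk Hz]]. destruct (Nat.ltb_spec k n).
  - exists (k + n)%nat. split; [lia|]. rewrite Jx_high by lia.
    replace (k + n - n)%nat with k by lia. exact Hz.
  - exists (k - n)%nat. split; [lia|]. rewrite Jx_low by lia.
    replace (k - n + n)%nat with k by lia. intro E. apply Hz. lra.
Qed.

Lemma upd_same z k : upd z k (z k) = z.
Proof.
  apply functional_extensionality. intro j. unfold upd.
  destruct (Nat.eqb_spec j k); subst; reflexivity.
Qed.

Lemma has_pderiv_val f k z l l' : has_pderiv f k z l -> l = l' -> has_pderiv f k z l'.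
Proof. intros H ->. exact H. Qed.

Lemma has_pderiv_ext f g k z l : (forall w, f w = g w) -> has_pderiv g k z l -> has_pderiv f k z l.
Proof. intros H. apply derivable_pt_lim_ext. intro. symmetry. apply H. Qed.

Lemma has_pderiv_const c k z : has_pderiv (fun _ => c) k z 0.
Proof. apply derivable_pt_lim_const. Qed.

Lemma has_pderiv_coord m k z : has_pderiv (fun w => w m) k z (if Nat.eqb m k then 1 else 0).
Proof.
  unfold has_pderiv, upd. destruct (Nat.eqb_spec m k).
  - apply derivable_pt_lim_id.
  - apply derivable_pt_lim_const.
Qed.

Lemma has_pderiv_plus f g k z l1 l2 : has_pderiv f k z l1 -> has_pderiv g k z l2 ->
  has_pderiv (fun w => f w + g w) k z (l1 + l2).
Proof. apply derivable_pt_lim_plus. Qed.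

Lemma has_pderiv_mult f g k z l1 l2 : has_pderiv f k z l1 -> has_pderiv g k z l2 ->
  has_pderiv (fun w => f w * g w) k z (l1 * g z + f z * l2).
Proof.
  intros H1 H2. pose proof (derivable_pt_lim_mult _ _ _ _ _ H1 H2) as H.
  cbv beta in H. rewrite upd_same in H. exact H.
Qed.

Lemma has_pderiv_Rpower f k z l c : 0 < f z -> has_pderiv f k z l ->
  has_pderiv (fun w => Rpower (f w) c) k z (c * Rpower (f z) (c - 1) * l).
Proof.
  intros Hf H. pose proof (derivable_pt_lim_power (f z) c Hf) as Hp.
  rewrite <- (upd_same z k) in Hp at 1.
  exact (derivable_pt_lim_comp _ _ _ _ _ H Hp).
Qed.

Lemma has_pderiv_rsum N g k z l : (forall i, (i < N)%nat -> has_pderiv (g i) k z (l i)) ->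
  has_pderiv (fun w => rsum N (fun i => g i w)) k z (rsum N l).
Proof.
  induction N; intro H.
  - exact (has_pderiv_const 0 k z).
  - eapply has_pderiv_ext. { intro w. apply rsum_S. }
    rewrite rsum_S. apply has_pderiv_plus; auto.
Qed.

Lemma pd_has_pderiv f k z l : has_pderiv f k z l -> pd f k z = l.
Proof.
  intros H. unfold pd. destruct (excluded_middle_informative (pdiff_at f k z)) as [H'|H'].
  - destruct (constructive_indefinite_description _ H') as [l' Hl']. simpl.
    eapply uniqueness_limite; eauto.
  - exfalso. apply H'. exists l. exact H.
Qed.

Lemma nonzero_pt_upd n z k : nonzero_pt n z ->
  exists a b, a < z k < b /\ forall s, a < s < b -> nonzero_pt n (upd z k s).
Proof.
  intros [m [Hm Hz]]. destruct (Nat.eqb_spec m k) as [<-|Hmk].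
  - exists (z m - Rabs (z m)), (z m + Rabs (z m)).
    assert (0 < Rabs (z m)) by (apply Rabs_pos_lt; exact Hz).
    split; [lra|]. intros s Hs. exists m. split; [exact Hm|].
    unfold upd. rewrite Nat.eqb_refl. intros ->.
    destruct (Rle_or_lt 0 (z m)); [rewrite Rabs_right in Hs | rewrite Rabs_left in Hs]; lra.
  - exists (z k - 1), (z k + 1). split; [lra|]. intros s _. exists m. split; [exact Hm|].
    unfold upd. destruct (Nat.eqb_spec m k); [contradiction | exact Hz].
Qed.

Lemma has_pderiv_local n f g k z l : nonzero_pt n z ->
  (forall w, nonzero_pt n w -> f w = g w) -> has_pderiv g k z l -> has_pderiv f k z l.
Proof.
  intros Hz Hfg. destruct (nonzero_pt_upd n z k Hz) as [a [b [Hab Hs]]].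
  apply (derivable_pt_lim_locally_ext _ _ _ a b _ Hab).
  intros s H. symmetry. apply Hfg, Hs, H.
Qed.

Lemma has_pderiv_pow2 f k z l : has_pderiv f k z l ->
  has_pderiv (fun w => f w ^ 2) k z (2 * f z * l).
Proof.
  intros H. apply (has_pderiv_ext _ (fun w => f w * f w)). { intro w. ring. }
  eapply has_pderiv_val. { apply has_pderiv_mult; exact H. } ring.
Qed.

Definition has_Xderiv (n i : nat) (f : (nat -> R) -> R) (z : nat -> R) (l : R) : Prop :=
  exists a b, has_pderiv f i z a /\ has_pderiv f (2 * n) z b /\ l = a + 2 * Jx n z i * b.

Lemma Xop_has_Xderiv n i f z l : has_Xderiv n i f z l -> Xop n i f z = l.
Proof.
  intros (a & b & Ha & Hb & ->). unfold Xop.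
  rewrite (pd_has_pderiv _ _ _ _ Ha), (pd_has_pderiv _ _ _ _ Hb). reflexivity.
Qed.

Lemma has_Xderiv_val n i f z l l' : has_Xderiv n i f z l -> l = l' -> has_Xderiv n i f z l'.
Proof. intros H ->. exact H. Qed.

Lemma has_Xderiv_const n i c z : has_Xderiv n i (fun _ => c) z 0.
Proof.
  exists 0, 0. split; [|split]; [apply has_pderiv_const .. | ring].
Qed.

Lemma has_Xderiv_plus n i f g z l1 l2 : has_Xderiv n i f z l1 -> has_Xderiv n i g z l2 ->
  has_Xderiv n i (fun w => f w + g w) z (l1 + l2).
Proof.
  intros (a1 & b1 & Ha1 & Hb1 & ->) (a2 & b2 & Ha2 & Hb2 & ->).
  exists (a1 + a2), (b1 + b2). split; [|split]; [apply has_pderiv_plus; assumption .. | ring].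
Qed.

Lemma has_Xderiv_mult n i f g z l1 l2 : has_Xderiv n i f z l1 -> has_Xderiv n i g z l2 ->
  has_Xderiv n i (fun w => f w * g w) z (l1 * g z + f z * l2).
Proof.
  intros (a1 & b1 & Ha1 & Hb1 & ->) (a2 & b2 & Ha2 & Hb2 & ->).
  eexists _, _. split; [|split]; [apply has_pderiv_mult; eassumption .. | ring].
Qed.

Lemma has_Xderiv_Rpower n i f z l c : 0 < f z -> has_Xderiv n i f z l ->
  has_Xderiv n i (fun w => Rpower (f w) c) z (c * Rpower (f z) (c - 1) * l).
Proof.
  intros Hf (a & b & Ha & Hb & ->).
  eexists _, _. split; [|split]; [apply has_pderiv_Rpower; eassumption .. | ring].
Qed.

Lemma has_Xderiv_local n i f g z l : nonzero_pt n z ->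
  (forall w, nonzero_pt n w -> f w = g w) -> has_Xderiv n i g z l -> has_Xderiv n i f z l.
Proof.
  intros Hz Hfg (a & b & Ha & Hb & ->).
  exists a, b. split; [|split]; [eapply has_pderiv_local; eassumption .. | reflexivity].
Qed.

Definition dquad (n : nat) (B : nat -> nat -> R) (k : nat) (z : nat -> R) : R :=
  if Nat.ltb k (2 * n) then 2 * mxv n B z k else 0.

Definition dphi (n : nat) (B : nat -> nat -> R) (k : nat) (z : nat -> R) : R :=
  2 * quad n B z * dquad n B k z + 2 * z (2 * n)%nat * (if Nat.eqb (2 * n) k then 1 else 0).

Definition hgrad (n : nat) (B : nat -> nat -> R) (z : nat -> R) (i : nat) : R :=
  quad n B z * mxv n B z i + z (2 * n)%nat * Jx n z i.

Definition dhgrad (n : nat) (B : nat -> nat -> R) (z : nat -> R) (i j : nat) : R :=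
  2 * mxv n B z j * mxv n B z i + quad n B z * B i j + 2 * Jx n z j * Jx n z i
  + z (2 * n)%nat * Jmat n i j.

Lemma has_pderiv_mxv n B m k z :
  has_pderiv (fun w => mxv n B w m) k z (if Nat.ltb k (2 * n) then B m k else 0).
Proof.
  eapply has_pderiv_val.
  { apply has_pderiv_rsum. intros j _.
    apply has_pderiv_mult; [apply has_pderiv_const | apply has_pderiv_coord]. }
  rewrite <- rsum_kronecker. apply rsum_ext. intros. ring.
Qed.

Lemma has_pderiv_quad n B k z : sym_mat n B -> has_pderiv (quad n B) k z (dquad n B k z).
Proof.
  intros HB. change (quad n B) with (fun w => rsum (2 * n) (fun i => mxv n B w i * w i)).
  eapply has_pderiv_val.
  { apply has_pderiv_rsum. intros i _.
    apply has_pderiv_mult; [apply has_pderiv_mxv | apply has_pderiv_coord]. }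
  rewrite rsum_plus, rsum_kronecker. unfold dquad.
  destruct (Nat.ltb_spec k (2 * n)).
  - assert (E : rsum (2 * n) (fun i => B i k * z i) = mxv n B z k).
    { apply rsum_ext. intros. rewrite HB by assumption. reflexivity. }
    rewrite E. ring.
  - rewrite (rsum_ext _ _ (fun _ => 0)), rsum_const; [ring | intros; ring].
Qed.

Lemma has_pderiv_phiM n B k z : sym_mat n B -> has_pderiv (phiM n B) k z (dphi n B k z).
Proof.
  intros HB. eapply has_pderiv_val.
  { apply has_pderiv_plus; apply has_pderiv_pow2; [apply has_pderiv_quad, HB | apply has_pderiv_coord]. }
  unfold dphi. ring.
Qed.

Lemma has_Xderiv_mxv n B i m z : (i < 2 * n)%nat ->
  has_Xderiv n i (fun w => mxv n B w m) z (B m i).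
Proof.
  intros Hi. do 2 eexists. split; [|split]; [apply has_pderiv_mxv .. |].
  destruct (Nat.ltb_spec i (2 * n)), (Nat.ltb_spec (2 * n) (2 * n)); try lia. ring.
Qed.

Lemma has_Xderiv_quad n B i z : sym_mat n B -> (i < 2 * n)%nat ->
  has_Xderiv n i (quad n B) z (2 * mxv n B z i).
Proof.
  intros HB Hi. do 2 eexists. split; [|split]; [apply has_pderiv_quad, HB .. |].
  unfold dquad. destruct (Nat.ltb_spec i (2 * n)), (Nat.ltb_spec (2 * n) (2 * n)); try lia. ring.
Qed.

Lemma has_Xderiv_tcoord n i z : (i < 2 * n)%nat ->
  has_Xderiv n i (fun w => w (2 * n)%nat) z (2 * Jx n z i).
Proof.
  intros Hi. do 2 eexists. split; [|split]; [apply has_pderiv_coord .. |].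
  destruct (Nat.eqb_spec (2 * n) i); [lia|]. rewrite Nat.eqb_refl. ring.
Qed.

Lemma has_Xderiv_phiM n B i z : sym_mat n B -> (i < 2 * n)%nat ->
  has_Xderiv n i (phiM n B) z (4 * hgrad n B z i).
Proof.
  intros HB Hi. do 2 eexists. split; [|split]; [apply has_pderiv_phiM, HB .. |].
  unfold dphi, dquad, hgrad.
  destruct (Nat.ltb_spec i (2 * n)), (Nat.ltb_spec (2 * n) (2 * n)); try lia.
  destruct (Nat.eqb_spec (2 * n) i); [lia|]. rewrite Nat.eqb_refl. ring.
Qed.

Lemma has_Xderiv_hgrad n B i j z : sym_mat n B -> (j < 2 * n)%nat ->
  has_Xderiv n j (fun w => hgrad n B w i) z (dhgrad n B z i j).
Proof.
  intros HB Hj. eapply has_Xderiv_val.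
  { apply has_Xderiv_plus; apply has_Xderiv_mult.
    - apply has_Xderiv_quad; assumption.
    - apply has_Xderiv_mxv, Hj.
    - apply has_Xderiv_tcoord, Hj.
    - exact (has_Xderiv_mxv n (Jmat n) j i z Hj). }
  unfold dhgrad. ring.
Qed.

Definition Gamma_exponent (n : nat) : R := - (Qdim n - 2) / 4.

Definition XGamma (n : nat) (B : nat -> nat -> R) (i : nat) (z : nat -> R) : R :=
  4 * Gamma_exponent n * Rpower (phiM n B z) (Gamma_exponent n - 1) * hgrad n B z i.

Lemma Rpower_pred x c : 0 < x -> Rpower x c = Rpower x (c - 1) * x.
Proof.
  intros Hx. rewrite <- (Rpower_1 x) at 3 by exact Hx.
  rewrite <- Rpower_plus. f_equal. ring.
Qed.

Lemma Gamma_exponent_eq n : Gamma_exponent n = - INR n / 2.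
Proof. unfold Gamma_exponent, Qdim. rewrite plus_INR, mult_INR. simpl. field. Qed.

Section Gamma.

Variables (n : nat) (B : nat -> nat -> R).
Hypothesis HB : sym_mat n B.

Lemma has_pderiv_GammaM k z : 0 < phiM n B z ->
  has_pderiv (GammaM n B) k z
    (Gamma_exponent n * Rpower (phiM n B z) (Gamma_exponent n - 1) * dphi n B k z).
Proof. intros Hphi. apply has_pderiv_Rpower; [exact Hphi | apply has_pderiv_phiM, HB]. Qed.

Lemma has_Xderiv_GammaM i z : (i < 2 * n)%nat -> 0 < phiM n B z ->
  has_Xderiv n i (GammaM n B) z (XGamma n B i z).
Proof.
  intros Hi Hphi. eapply has_Xderiv_val.
  { apply has_Xderiv_Rpower; [exact Hphi | apply has_Xderiv_phiM; assumption]. }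
  unfold XGamma, Gamma_exponent. ring.
Qed.

Lemma has_Xderiv_XGamma i j z : (j < 2 * n)%nat -> 0 < phiM n B z ->
  has_Xderiv n j (XGamma n B i) z
    (4 * Gamma_exponent n * Rpower (phiM n B z) (Gamma_exponent n - 1 - 1) *
     (4 * (Gamma_exponent n - 1) * hgrad n B z j * hgrad n B z i + phiM n B z * dhgrad n B z i j)).
Proof.
  intros Hj Hphi. eapply has_Xderiv_val.
  { apply has_Xderiv_mult; [apply has_Xderiv_mult|].
    - apply has_Xderiv_const.
    - apply has_Xderiv_Rpower; [exact Hphi | apply has_Xderiv_phiM; assumption].
    - apply has_Xderiv_hgrad; assumption. }
  cbv beta. rewrite (Rpower_pred _ (Gamma_exponent n - 1)) by exact Hphi. ring.
Qed.

Hypothesis Hphi : forall w, nonzero_pt n w -> 0 < phiM n B w.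

Lemma D2H_GammaM i j z : (i < 2 * n)%nat -> (j < 2 * n)%nat -> nonzero_pt n z ->
  D2H n j i (GammaM n B) z =
  4 * Gamma_exponent n * Rpower (phiM n B z) (Gamma_exponent n - 1 - 1) *
  (4 * (Gamma_exponent n - 1) * hgrad n B z i * hgrad n B z j + phiM n B z *
   (2 * mxv n B z i * mxv n B z j + quad n B z * B i j + 2 * Jx n z i * Jx n z j)).
Proof.
  intros Hi Hj Hz.
  assert (XG : forall k, (k < 2 * n)%nat ->
            forall w, nonzero_pt n w -> Xop n k (GammaM n B) w = XGamma n B k w).
  { intros k Hk w Hw. apply Xop_has_Xderiv, has_Xderiv_GammaM; auto. }
  unfold D2H.
  rewrite (Xop_has_Xderiv _ _ _ _ _ (has_Xderiv_local _ _ _ _ _ _ Hz (XG i Hi)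
             (has_Xderiv_XGamma i j z Hj (Hphi z Hz)))),
          (Xop_has_Xderiv _ _ _ _ _ (has_Xderiv_local _ _ _ _ _ _ Hz (XG j Hj)
             (has_Xderiv_XGamma j i z Hi (Hphi z Hz)))).
  unfold dhgrad. rewrite (HB j i), (Jmat_antisym n j i) by assumption. field.
Qed.

Lemma dphi_pdiff k k' z : pdiff_at (dphi n B k) k' z.
Proof.
  unfold dphi, dquad. destruct (Nat.ltb k (2 * n)); eexists;
    repeat first [ apply has_pderiv_plus | apply has_pderiv_mult | apply has_pderiv_const
                 | apply has_pderiv_quad, HB | apply has_pderiv_mxv | apply has_pderiv_coord ].
Qed.

Lemma GammaM_pdiff2 k k' z : nonzero_pt n z ->
  pdiff_at (GammaM n B) k z /\ pdiff_at (pd (GammaM n B) k) k' z.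
Proof.
  intros Hz. split.
  - eexists. apply has_pderiv_GammaM, Hphi, Hz.
  - destruct (dphi_pdiff k k' z) as [l Hl]. eexists.
    apply (has_pderiv_local n _
      (fun w => Gamma_exponent n * Rpower (phiM n B w) (Gamma_exponent n - 1) * dphi n B k w)).
    + exact Hz.
    + intros w Hw. apply pd_has_pderiv, has_pderiv_GammaM, Hphi, Hw.
    + apply has_pderiv_mult; [apply has_pderiv_mult|].
      * apply has_pderiv_const.
      * apply has_pderiv_Rpower; [apply Hphi, Hz | apply has_pderiv_phiM, HB].
      * exact Hl.
Qed.

End Gamma.

Section Symplectic.

Variables (n : nat) (M A : nat -> nat -> R).
Hypotheses (HM : sym_mat n M) (HMA : symplectic n M A).

Lemma Minv_entry i j : (i < 2 * n)%nat -> (j < 2 * n)%nat ->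
  A i j = dsum n (fun k l => Jmat n k i * M k l * Jmat n l j).
Proof.
  intros Hi Hj. rewrite (proj2 HMA) by assumption. unfold matmul, trmat.
  apply rsum_ext. intros. rewrite <- rsum_scal. apply rsum_ext. intros. ring.
Qed.

Lemma Minv_sym : sym_mat n A.
Proof.
  intros i j Hi Hj. rewrite !Minv_entry by assumption. unfold dsum. rewrite rsum_swap.
  apply rsum_ext. intros. apply rsum_ext. intros. rewrite HM by assumption. ring.
Qed.

Lemma mxv_M_Minv z i : (i < 2 * n)%nat -> mxv n M (mxv n A z) i = z i.
Proof.
  intros Hi. rewrite mxv_matmul. unfold mxv.
  rewrite (rsum_ext _ _ (fun k => z k * (if Nat.eqb k i then 1 else 0))), rsum_kronecker.
  - destruct (Nat.ltb_spec i (2 * n)); [reflexivity | lia].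
  - intros k Hk. rewrite (proj1 (proj1 HMA i k Hi Hk)). unfold idmat.
    rewrite Nat.eqb_sym. ring.
Qed.

Lemma bform_Minv z : bform n M (mxv n A z) (mxv n A z) = quad n A z.
Proof.
  rewrite bform_mxv_r. apply rsum_ext. intros. rewrite mxv_M_Minv by assumption. reflexivity.
Qed.

Lemma bform_J_Minv z : bform n M (Jx n z) (mxv n A z) = 0.
Proof.
  rewrite <- (quad_antisym n (Jmat n) z (Jmat_antisym n)), bform_mxv_r.
  apply rsum_ext. intros. rewrite mxv_M_Minv by assumption. reflexivity.
Qed.

Lemma quad_Minv_bform_J z : quad n A z = bform n M (Jx n z) (Jx n z).
Proof.
  transitivity (rsum (2 * n) (fun i => mxv n (trmat (Jmat n)) (mxv n (matmul n M (Jmat n)) z) i * z i)).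
  - apply rsum_ext. intros i Hi. f_equal. rewrite mxv_matmul. apply rsum_ext. intros j Hj.
    rewrite (proj2 HMA) by assumption. reflexivity.
  - rewrite mxv_trmat_adj, bform_mxv_r. apply rsum_ext. intros.
    rewrite <- mxv_matmul. apply Rmult_comm.
Qed.

Lemma trace_M_Minv : dsum n (fun i j => M i j * A i j) = INR (2 * n).
Proof.
  rewrite <- (Rmult_1_r (INR _)), <- rsum_const. apply rsum_ext. intros i Hi.
  pose proof (proj1 (proj1 HMA i i Hi Hi)) as E. unfold idmat in E.
  rewrite Nat.eqb_refl in E. rewrite <- E.
  apply rsum_ext. intros. rewrite (Minv_sym i) by assumption. reflexivity.
Qed.

Lemma bform_hgrad z : bform n M (hgrad n A z) (hgrad n A z) = quad n A z * phiM n A z.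
Proof.
  change (hgrad n A z) with (fun i => quad n A z * mxv n A z i + z (2 * n)%nat * Jx n z i).
  rewrite bform_comb, (bform_sym n M (mxv n A z) (Jx n z)), bform_J_Minv, bform_Minv,
    <- quad_Minv_bform_J by exact HM.
  unfold phiM. ring.
Qed.

Hypothesis HMpos : posdef_mat n M.

Lemma quad_Minv_pos z : (exists k, (k < 2 * n)%nat /\ z k <> 0) -> 0 < quad n A z.
Proof.
  intros Hz. rewrite quad_Minv_bform_J, bform_mxv_r.
  rewrite (rsum_ext _ _ (fun i => mxv n M (Jx n z) i * Jx n z i)) by (intros; apply Rmult_comm).
  apply HMpos, Jx_nonzero, Hz.
Qed.

Lemma phiM_pos z : nonzero_pt n z -> 0 < phiM n A z.
Proof.
  intros [k [Hk Hz]]. unfold phiM.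
  pose proof (pow2_ge_0 (quad n A z)). pose proof (pow2_ge_0 (z (2 * n)%nat)).
  destruct (Nat.eq_dec k (2 * n)) as [<-|Hk'].
  - assert (0 < z k ^ 2) by (rewrite <- Rsqr_pow2; apply Rsqr_pos_lt, Hz). lra.
  - assert (Hq : 0 < quad n A z) by (apply quad_Minv_pos; exists k; split; [lia | exact Hz]).
    assert (0 < quad n A z ^ 2) by (apply pow_lt, Hq). lra.
Qed.

Lemma LM_GammaM z : nonzero_pt n z -> LM n M (GammaM n A) z = 0.
Proof.
  intros Hz. set (K := 4 * Gamma_exponent n * Rpower (phiM n A z) (Gamma_exponent n - 1 - 1)).
  change (LM n M (GammaM n A) z) with (dsum n (fun i j => M i j * D2H n j i (GammaM n A) z)).
  transitivity (dsum n (fun i j =>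
    K * 4 * (Gamma_exponent n - 1) * (M i j * hgrad n A z i * hgrad n A z j) +
    (K * phiM n A z * 2 * (M i j * mxv n A z i * mxv n A z j) +
    (K * phiM n A z * quad n A z * (M i j * A i j) +
     K * phiM n A z * 2 * (M i j * Jx n z i * Jx n z j))))).
  { apply dsum_ext. intros i j Hi Hj.
    rewrite D2H_GammaM by auto using Minv_sym, phiM_pos. unfold K. ring. }
  rewrite !dsum_plus, !dsum_scal.
  rewrite (bform_hgrad z : dsum n (fun i j => M i j * hgrad n A z i * hgrad n A z j) = _),
    (bform_Minv z : dsum n (fun i j => M i j * mxv n A z i * mxv n A z j) = _),
    (eq_sym (quad_Minv_bform_J z) : dsum n (fun i j => M i j * Jx n z i * Jx n z j) = _),
    trace_M_Minv, Gamma_exponent_eq, mult_INR.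
  unfold K. rewrite Gamma_exponent_eq. simpl (INR 2). field.
Qed.

End Symplectic.

Theorem mainTheorem3 (n : nat) (M Minv : nat -> nat -> R)
  (Hsym : sym_mat n M) (Hpos : posdef_mat n M) (Hsp : symplectic n M Minv) :
  (forall w, nonzero_pt n w -> forall k k', (k <= 2 * n)%nat -> (k' <= 2 * n)%nat ->
      pdiff_at (GammaM n Minv) k w /\ pdiff_at (pd (GammaM n Minv) k) k' w) /\
  (forall z, nonzero_pt n z -> LM n M (GammaM n Minv) z = 0).
Proof.
  split.
  - intros w Hw k k' _ _.
    apply GammaM_pdiff2; [apply (Minv_sym n M) | apply (phiM_pos n M) | ]; assumption.
  - apply LM_GammaM; assumption.
Qed.
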